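(* Fix $g\ge2$ and let $F=F^{[g]}$. For every real orthogonal $g\times g$ matrix $U=(u_{jk})$ and every $X=(X_1,\dots,X_g)\in\mathcal D_F$, the tuple $UX=\left(\sum_k u_{1k}X_k,\dots,\sum_k u_{gk}X_k\right)$ lies in $\mathcal D_F$. In particular, $(\pm X_1,\dots,\pm X_g)\in\mathcal D_F$ for every choice of signs.
   Context: $F^{[g]}$ is defined recursively: $F^{[2]}=(\sigma_z,\sigma_x)$ with $\sigma_z=\begin{bmatrix}1&0\\0&-1\end{bmatrix}$, $\sigma_x=\begin{bmatrix}0&1\\1&0\end{bmatrix}$, and if $F^{[g]}=(F_1,\dots,F_g)$ then $F^{[g+1]}=(F_1\otimes\sigma_z,\dots,F_g\otimes\sigma_z,I\otimes\sigma_x)$. For a self-adjoint matrix tuple $A$, $\mathcal D_A=\bigcup_n\{X\in SM_n(\mathbb C)^g: I-\sum_i A_i\otimes X_i\succeq0\}$, where $SM_n(\mathbb C)^g$ is the set of $g$-tuples of self-adjoint $n\times n$ complex matrices. *)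

From HB Require Import structures.
From mathcomp Require Import all_boot all_order all_algebra.
From mathcomp Require Import complex mxtens.
From mathcomp Require Import reals.
Set Implicit Arguments. Unset Strict Implicit. Unset Printing Implicit Defensive.
Import Order.TTheory GRing.Theory Num.Theory.
Local Open Scope ring_scope.

Section Defs.
Variable C : numClosedFieldType.

Definition adjmx m n (M : 'M[C]_(m, n)) : 'M[C]_(n, m) := (map_mx Num.conj M)^T.

Definition selfadj n (M : 'M[C]_n) : Prop := adjmx M = M.

(* positive semidefinite: v^* M v >= 0 for all v (>= 0 in a numClosedField
   means real and nonnegative) *)
Definition psd n (M : 'M[C]_n) : Prop :=
  forall v : 'cV[C]_n, 0 <= (adjmx v *m M *m v) 0 0.

Definition inDA g d (A : 'I_g -> 'M[C]_d) n (X : 'I_g -> 'M[C]_n) : Prop :=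
  (forall i, selfadj (X i)) /\
  psd (1%:M - \sum_(i < g) tensmx (A i) (X i)).

Definition sigz : 'M[C]_2 := \matrix_(i < 2, j < 2)
  (if (i == j) then (if (i == 0 :> nat)%N then 1 else -1) else 0).
Definition sigx : 'M[C]_2 := \matrix_(i < 2, j < 2)
  (if (i == j) then 0 else 1).

Fixpoint dimF (m : nat) : nat := if m is m'.+1 then (dimF m' * 2)%N else 2%N.

(* Fmat m = F^[m+2] = (F_1, ..., F_(m+2)), indexed by 'I_(m+2) *)
Fixpoint Fmat (m : nat) : 'I_m.+2 -> 'M[C]_(dimF m) :=
  match m return 'I_m.+2 -> 'M[C]_(dimF m) with
  | 0 => fun i => if (i == 0 :> nat)%N then sigz else sigx
  | m'.+1 => fun i =>
      if (i < m'.+2)%N then tensmx (@Fmat m' (inord i)) sigz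
      else tensmx (1%:M : 'M[C]_(dimF m')) sigx
  end.
End Defs.

(* The F_j of F^[g] are Hermitian, satisfy the Clifford relations
   F_j F_k + F_k F_j = 2 delta_jk, and admit a unitary grading W anticommuting
   with all of them (W = I (x) sigma_z sigma_x).  For a real vector w with
   c = |w|^2 > 0 put S = sum_j w_j F_j, so that S^2 = c.  Then T = S W satisfies
   T^* T = c and T^* F_k T = c F_k - 2 w_k S = c sum_j h_jk F_j, where h is the
   Householder reflection along w.  Hence conjugating I - sum_k F_k (x) X_k by
   T (x) I gives c (I - sum_j F_j (x) (hX)_j), and D_F is invariant under h.
   Every real orthogonal matrix is a product of Householder reflections, and
   sign changes are orthogonal. *)

From HB Require Import structures.
From mathcomp Require Import all_boot all_order all_algebra.
From mathcomp Require Import complex mxtens.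
From mathcomp Require Import reals.
From mathcomp Require Import zify ring.
Set Implicit Arguments. Unset Strict Implicit. Unset Printing Implicit Defensive.
Import Order.TTheory GRing.Theory Num.Theory.
Local Open Scope ring_scope.

Section TensorProduct.
Variable R : comPzRingType.

Lemma tensmxDl m n p q (A B : 'M[R]_(m, n)) (D : 'M[R]_(p, q)) :
  (A + B) *t D = A *t D + B *t D.
Proof. by apply/matrixP=> i j; rewrite !mxE mulrDl. Qed.

Lemma tensmxDr m n p q (A : 'M[R]_(m, n)) (B D : 'M[R]_(p, q)) :
  A *t (B + D) = A *t B + A *t D.
Proof. by apply/matrixP=> i j; rewrite !mxE mulrDr. Qed.

Lemma tensmxZl m n p q a (A : 'M[R]_(m, n)) (D : 'M[R]_(p, q)) :
  (a *: A) *t D = a *: (A *t D).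
Proof. by apply/matrixP=> i j; rewrite !mxE mulrA. Qed.

Lemma tensmxZr m n p q a (A : 'M[R]_(m, n)) (D : 'M[R]_(p, q)) :
  A *t (a *: D) = a *: (A *t D).
Proof. by apply/matrixP=> i j; rewrite !mxE mulrCA. Qed.

Lemma tensmxNr m n p q (A : 'M[R]_(m, n)) (D : 'M[R]_(p, q)) :
  A *t (- D) = - (A *t D).
Proof. by rewrite -scaleN1r tensmxZr scaleN1r. Qed.

Lemma tensmx_suml m n p q (I : finType) (F : I -> 'M[R]_(m, n)) (D : 'M[R]_(p, q)) :
  (\sum_i F i) *t D = \sum_i (F i *t D).
Proof.
by apply: (big_morph (fun A => A *t D)) => [A B|]; rewrite ?tensmxDl ?tens0mx.
Qed.

Lemma tensmx_sumr m n p q (I : finType) (F : I -> 'M[R]_(p, q)) (A : 'M[R]_(m, n)) :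
  A *t (\sum_i F i) = \sum_i (A *t F i).
Proof.
by apply: (big_morph (fun D => A *t D)) => [B D|]; rewrite ?tensmxDr ?tensmx0.
Qed.

Lemma tens_scalar_mx1 m n (a : R) :
  (a%:M : 'M[R]_m) *t (1%:M : 'M[R]_n) = a%:M.
Proof.
apply/matrixP=> i j.
case: (mxtens_indexP i)=> i0 i1; case: (mxtens_indexP j)=> j0 j1.
rewrite tensmxE !mxE mulr_natr -mulrnA mulnb; congr (_ *+ _).
by rewrite (inj_eq (can_inj (@mxtens_indexK _ _))) xpair_eqE.
Qed.

Lemma tensmx11 m n : (1%:M : 'M[R]_m) *t (1%:M : 'M[R]_n) = 1%:M.
Proof. exact: tens_scalar_mx1. Qed.

End TensorProduct.

Section Adjoint.
Variable C : numClosedFieldType.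

Lemma adjmxM m n p (A : 'M[C]_(m, n)) (B : 'M[C]_(n, p)) :
  adjmx (A *m B) = adjmx B *m adjmx A.
Proof. by rewrite /adjmx map_mxM trmx_mul. Qed.

Lemma adjmxZ m n a (A : 'M[C]_(m, n)) : adjmx (a *: A) = a^* *: adjmx A.
Proof. by rewrite /adjmx map_mxZ linearZ. Qed.

Lemma adjmx_sum m n (I : finType) (F : I -> 'M[C]_(m, n)) :
  adjmx (\sum_i F i) = \sum_i adjmx (F i).
Proof. by rewrite /adjmx map_mx_sum linear_sum. Qed.

Lemma adjmx1 n : adjmx (1%:M : 'M[C]_n) = 1%:M.
Proof. by rewrite /adjmx map_mx1 trmx1. Qed.

Lemma adjmx_tens m n p q (A : 'M[C]_(m, n)) (B : 'M[C]_(p, q)) :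
  adjmx (A *t B) = adjmx A *t adjmx B.
Proof. by rewrite /adjmx map_mxT trmx_tens. Qed.

Lemma psd_adjmx_mul n k (M : 'M[C]_n) (V : 'M[C]_(n, k)) :
  psd M -> psd (adjmx V *m M *m V).
Proof. by move=> psdM v; have := psdM (V *m v); rewrite adjmxM !mulmxA. Qed.

Lemma psd_scale n (c : C) (M : 'M[C]_n) : 0 < c -> psd (c *: M) -> psd M.
Proof.
move=> c_gt0 psdcM v; have := psdcM v.
by rewrite -scalemxAr -scalemxAl mxE pmulr_rge0.
Qed.

End Adjoint.

Section Clifford.
Variable C : numClosedFieldType.
Local Notation z := (sigz C).
Local Notation x := (sigx C).

Definition graded_clifford {g d} (F : 'I_g -> 'M[C]_d) :=
  [/\ forall j, selfadj (F j),
      forall j k, F j *m F k + F k *m F j = ((j == k)%:R *+ 2)%:M &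
      exists2 W : 'M_d, adjmx W *m W = 1%:M & forall j, W *m F j = - (F j *m W)].

Local Ltac mx2 := rewrite /adjmx /sigz /sigx;
  apply/matrixP=> -[[|[|?]] ?] -[[|[|?]] ?] //;
  rewrite !(mxE, big_ord_recl, big_ord0) /=;
  rewrite ?(mulr0, mul0r, mulr1, mul1r, addr0, add0r, mulrNN, oppr0, opprK,
            mulrN1, mulN1r, conjC0, conjC1, conjCN1, subrr, addNr) ?mulr2n.

Lemma sigz_selfadj : selfadj z. Proof. by mx2. Qed.
Lemma sigx_selfadj : selfadj x. Proof. by mx2. Qed.
Lemma sigz_sq : z *m z = 1%:M. Proof. by mx2. Qed.
Lemma sigx_sq : x *m x = 1%:M. Proof. by mx2. Qed.
Lemma sigzx_anti : z *m x + x *m z = 0. Proof. by mx2. Qed.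
Lemma sigzx_unitary : adjmx (z *m x) *m (z *m x) = 1%:M. Proof. by mx2. Qed.
Lemma sigzx_anti_sigz : (z *m x) *m z = - (z *m (z *m x)). Proof. by mx2. Qed.
Lemma sigzx_anti_sigx : (z *m x) *m x = - (x *m (z *m x)). Proof. by mx2. Qed.

Lemma graded_clifford_Fmat m : graded_clifford (@Fmat C m).
Proof.
elim: m => [|m [Fsa Fanti [W Wunitary Wanti]]].
  split.
  - by case=> [[|[|?]] ?] //=; [exact: sigz_selfadj | exact: sigx_selfadj].
  - case=> [[|[|?]] ?] // [[|[|?]] ?] //=;
      by rewrite ?sigz_sq ?sigx_sq ?sigzx_anti 1?addrC ?sigzx_anti raddfMn /=
                 ?mulr2n ?mul0rn ?raddf0 ?addr0.
  - exists (z *m x); first exact: sigzx_unitary.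
    by case=> [[|[|?]] ?] //=; rewrite ?sigzx_anti_sigz ?sigzx_anti_sigx.
have Fmat_old (j : 'I_m.+3) : (j < m.+2)%N -> @Fmat C m.+1 j = Fmat C (inord j) *t z.
  by move=> /= ->.
have Fmat_new (j : 'I_m.+3) : (j >= m.+2)%N -> @Fmat C m.+1 j = 1%:M *t x.
  by rewrite leqNgt /= => /negbTE ->.
split.
- move=> j; case: (ltnP j m.+2) => [/Fmat_old|/Fmat_new] ->;
    by rewrite /selfadj adjmx_tens ?Fsa ?sigz_selfadj ?sigx_selfadj ?adjmx1.
- move=> j k.
  case: (ltnP j m.+2) => hj; case: (ltnP k m.+2) => hk.
  + rewrite !Fmat_old // !tensmx_mul sigz_sq -tensmxDl Fanti tens_scalar_mx1.
    by congr ((_ *+ 2)%:M); rewrite -val_eqE /= !inordK.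
  + rewrite Fmat_old // Fmat_new // !tensmx_mul.
    have /negbTE -> : j != k by apply: contraTneq hj => ->; rewrite -leqNgt.
    by rewrite mul1mx mulmx1 -tensmxDr sigzx_anti tensmx0 /= mul0rn raddf0.
  + rewrite Fmat_new // Fmat_old // !tensmx_mul.
    have /negbTE -> : j != k by apply: contraTneq hk => <-; rewrite -leqNgt.
    by rewrite mul1mx mulmx1 -tensmxDr addrC sigzx_anti tensmx0 /= mul0rn raddf0.
  + have -> : j = k by apply/val_inj => /=; move: (ltn_ord j) (ltn_ord k) hj hk; lia.
    by rewrite !Fmat_new // tensmx_mul eqxx mul1mx sigx_sq tensmx11 raddfMn mulr2n.
- exists (1%:M *t (z *m x)).
    by rewrite adjmx_tens adjmx1 tensmx_mul mul1mx sigzx_unitary tensmx11.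
  move=> j; case: (ltnP j m.+2) => [/Fmat_old|/Fmat_new] ->; rewrite !tensmx_mul mul1mx.
    by rewrite mulmx1 sigzx_anti_sigz tensmxNr.
  by rewrite sigzx_anti_sigx tensmxNr.
Qed.

End Clifford.

Section Householder.
Variables (R : fieldType) (g : nat).
Implicit Types (v w : 'cV[R]_g).

Definition householder w : 'M[R]_g :=
  1%:M - (2 / (w^T *m w) 0 0) *: (w *m w^T).

Lemma householderE w i j :
  householder w i j = (i == j)%:R - 2 / (w^T *m w) 0 0 * (w i 0 * w j 0).
Proof. by rewrite !mxE big_ord1 !mxE. Qed.

Lemma tr_householder w : (householder w)^T = householder w.
Proof. by rewrite /householder linearB linearZ /= trmx_mul trmxK trmx1. Qed.

Lemma householder_mul w v :
  householder w *m v = v - (2 / (w^T *m w) 0 0 * (w^T *m v) 0 0) *: w.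
Proof.
rewrite mulmxBl mul1mx -scalemxAl -mulmxA {1}[w^T *m v]mx11_scalar.
by rewrite mul_mx_scalar scalerA.
Qed.

Lemma householder_fix w v : (w^T *m v) 0 0 = 0 -> householder w *m v = v.
Proof. by move=> wv0; rewrite householder_mul wv0 mulr0 scale0r subr0. Qed.

Lemma householderK w : (w^T *m w) 0 0 != 0 -> householder w *m householder w = 1%:M.
Proof.
move=> c_neq0.
have Hw : householder w *m w = - w.
  by rewrite householder_mul divfK // scaler_nat mulr2n opprD addrA subrr add0r.
rewrite {2}/householder mulmxBr mulmx1 -scalemxAr mulmxA Hw mulNmx scalerN.
by rewrite /householder opprK subrK.
Qed.

End Householder.

Lemma map_householder (R R' : fieldType) g (f : {rmorphism R -> R'}) (w : 'cV[R]_g) :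
  map_mx f (householder w) = householder (map_mx f w).
Proof.
rewrite map_mxB map_mx1 map_mxZ map_mxM -map_trmx; congr (_ - _ *: _).
by rewrite map_trmx -map_mxM [X in _ = _ / X]mxE fmorph_div rmorph_nat.
Qed.

Section OrthogonalDecomposition.
Variables (R : realFieldType) (g : nat).
Implicit Types (u e w : 'cV[R]_g) (U : 'M[R]_g).

Lemma tr_mx11 (A : 'M[R]_1) : A^T = A.
Proof. by rewrite [A]mx11_scalar tr_scalar_mx. Qed.

Lemma householder_swap u e :
  u^T *m u = e^T *m e -> ((u - e)^T *m (u - e)) 0 0 != 0 ->
  householder (u - e) *m u = e.
Proof.
move=> uu_ee; set w := u - e => c_neq0.
have eu_ue : e^T *m u = u^T *m e by rewrite -[e^T *m u]tr_mx11 trmx_mul trmxK.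
have ww : w^T *m w = 2%:R *: (w^T *m u).
  rewrite /w [(u - e)^T]linearB /= !mulmxBl !mulmxBr -uu_ee eu_ue opprB.
  by rewrite scaler_nat mulr2n.
have wu_neq0 : (w^T *m u) 0 0 != 0.
  by move: c_neq0; rewrite ww [X in X != 0]mxE mulf_eq0 negb_or => /andP[].
rewrite householder_mul ww [X in 2 / X]mxE.
have -> : 2 / (2%:R * (w^T *m u) 0 0) * (w^T *m u) 0 0 = 1 by field.
by rewrite scale1r /w subKr.
Qed.

Lemma dotmx_self_ge0 w : 0 <= (w^T *m w) 0 0.
Proof. by rewrite mxE sumr_ge0 // => t _; rewrite mxE -expr2 sqr_ge0. Qed.

Lemma dotmx_self_eq0 w : (w^T *m w) 0 0 = 0 -> w = 0.
Proof.
rewrite mxE => /psumr_eq0P w0; apply/colP => i; rewrite mxE.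
have /w0/(_ i isT)/eqP : forall t, true -> 0 <= w^T 0 t * w t 0.
  by move=> t _; rewrite mxE -expr2 sqr_ge0.
by rewrite mxE mulf_eq0 orbb => /eqP.
Qed.

Lemma orthomx_dot_col U i j :
  U^T *m U = 1%:M -> (col i U)^T *m col j U = (i == j)%:R%:M.
Proof.
move=> hU; apply/matrixP => a b; rewrite [a]ord1 [b]ord1 !mxE mulr1n.
have := congr1 (fun M : 'M[R]_g => M i j) hU; rewrite !mxE => <-.
by apply: eq_bigr => t _; rewrite !mxE.
Qed.

Lemma householder_next_col U (r : 'I_g) :
  U^T *m U = 1%:M -> (forall j : 'I_g, (j < r)%N -> col j U = col j 1%:M) ->
  forall w, w = col r U - col r 1%:M -> (w^T *m w) 0 0 != 0 ->
  forall j : 'I_g, (j <= r)%N -> col j (householder w *m U) = col j 1%:M.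
Proof.
move=> hU fixU w def_w c_neq0 j; rewrite colE -mulmxA -colE.
have orth1 : (1%:M : 'M[R]_g)^T *m 1%:M = 1%:M by rewrite trmx1 mul1mx.
rewrite leq_eqVlt => /orP[/eqP/val_inj-> | ltjr].
  by rewrite def_w in c_neq0 *; apply: householder_swap; rewrite // !orthomx_dot_col.
have /negbTE neq_rj : r != j by rewrite neq_ltn ltjr orbT.
rewrite fixU // householder_fix // def_w linearB mulmxBl -{1}(fixU j ltjr).
by rewrite !orthomx_dot_col // neq_rj subrr mxE.
Qed.

Lemma orthomx_householder_ind (P : 'M[R]_g -> Prop) :
  P 1%:M -> (forall w U, (w^T *m w) 0 0 != 0 -> P U -> P (householder w *m U)) ->
  forall U, U^T *m U = 1%:M -> P U.
Proof.
move=> P1 PH; suff PU d U : U^T *m U = 1%:M ->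
    (forall j : 'I_g, (j < g - d)%N -> col j U = col j 1%:M) -> P U.
  by move=> U hU; apply: (PU g) => // j; rewrite subnn.
elim: d U => [|d IHd] U hU fixU.
  rewrite subn0 in fixU.
  suff -> : U = 1%:M by [].
  by apply/matrixP => i j; have /colP/(_ i) := fixU j (ltn_ord j); rewrite !mxE.
have [le_gd | lt_dg] := leqP g d.
  by apply: IHd hU _ => j; rewrite (eqP (_ : g - d == 0)%N) ?subn_eq0.
have lt_r_g : (g - d.+1 < g)%N by lia.
pose r := Ordinal lt_r_g.
have le_r (j : 'I_g) : (j < g - d)%N -> (j <= r)%N by rewrite /=; lia.
pose w := col r U - col r 1%:M.
have [/dotmx_self_eq0/eqP | c_neq0] := eqVneq ((w^T *m w) 0 0) 0.
  rewrite subr_eq0 => /eqP colrU; apply: IHd hU _ => j /le_r.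
  by rewrite leq_eqVlt => /orP[/eqP/val_inj-> | /fixU].
have HK := householderK c_neq0.
have -> : U = householder w *m (householder w *m U) by rewrite mulmxA HK mul1mx.
apply: (PH _ _ c_neq0 (IHd _ _ _)) => [|j /le_r].
  by rewrite trmx_mul tr_householder mulmxA -(mulmxA U^T) HK mulmx1 hU.
exact: (householder_next_col (r:=r) hU fixU (erefl w) c_neq0).
Qed.

End OrthogonalDecomposition.

Section MatrixAction.
Variables (R : pzRingType) (V : lmodType R) (g : nat).

Definition mxact (a : 'M[R]_g) (X : 'I_g -> V) : 'I_g -> V :=
  fun j => \sum_k a j k *: X k.

Lemma mxact_diag (e : 'rV[R]_g) X j : mxact (diag_mx e) X j = e 0 j *: X j.
Proof.
rewrite /mxact (bigD1 j) //= big1 => [|k /negbTE nkj]; first by rewrite mxE eqxx addr0.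
by rewrite mxE eq_sym nkj scale0r.
Qed.

Lemma mxact1 X j : mxact 1%:M X j = X j.
Proof. by rewrite -diag_const_mx mxact_diag mxE scale1r. Qed.

Lemma mxact_mul A B X j : mxact (A *m B) X j = mxact A (mxact B X) j.
Proof.
rewrite /mxact; under eq_bigr do rewrite mxE scaler_suml.
rewrite exchange_big /=; apply: eq_bigr => l _.
by rewrite scaler_sumr; apply: eq_bigr => k _; rewrite scalerA.
Qed.

End MatrixAction.

Section SpectrahedronAction.
Variable C : numClosedFieldType.

Lemma eq_inDA g d (A : 'I_g -> 'M[C]_d) n (X Y : 'I_g -> 'M[C]_n) :
  (forall j, X j = Y j) -> inDA A X -> inDA A Y.
Proof.
move=> eqXY [sa_X psd_X]; split=> [j|]; first by rewrite -eqXY.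
by under eq_bigr do rewrite -eqXY.
Qed.

Variables (g d : nat) (F : 'I_g -> 'M[C]_d).

Lemma pencil_mxact n (a : 'M[C]_g) (X : 'I_g -> 'M[C]_n) :
  \sum_j F j *t mxact a X j = \sum_k (\sum_j a j k *: F j) *t X k.
Proof.
under eq_bigr do rewrite /mxact tensmx_sumr.
rewrite exchange_big /=; apply: eq_bigr => k _.
by rewrite tensmx_suml; apply: eq_bigr => j _; rewrite tensmxZl tensmxZr.
Qed.

Lemma selfadj_mxact n (a : 'M[C]_g) (X : 'I_g -> 'M[C]_n) j :
  (forall j k, (a j k)^* = a j k) -> (forall k, selfadj (X k)) ->
  selfadj (mxact a X j).
Proof.
move=> a_real sa_X; rewrite /selfadj adjmx_sum; apply: eq_bigr => k _.
by rewrite adjmxZ a_real sa_X.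
Qed.

Lemma inDA_mxact_congr (a : 'M[C]_g) (T : 'M[C]_d) (c : C) n
    (X : 'I_g -> 'M[C]_n) :
  0 < c -> (forall j k, (a j k)^* = a j k) -> adjmx T *m T = c%:M ->
  (forall k, adjmx T *m F k *m T = c *: \sum_j a j k *: F j) ->
  inDA F X -> inDA F (mxact a X).
Proof.
move=> c_gt0 a_real TT TFT [sa_X psd_X]; split=> [j|].
  exact: selfadj_mxact.
apply: (psd_scale c_gt0).
suff -> : c *: (1%:M - \sum_j F j *t mxact a X j) =
    adjmx (T *t 1%:M) *m (1%:M - \sum_k F k *t X k) *m (T *t (1%:M : 'M_n)).
  exact: psd_adjmx_mul.
rewrite mulmxBr mulmxBl mulmx1 adjmx_tens adjmx1 tensmx_mul mul1mx TT.
rewrite tens_scalar_mx1 scalerBr scalemx1 pencil_mxact scaler_sumr.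
congr (_ - _); rewrite mulmx_sumr mulmx_suml; apply: eq_bigr => k _.
by rewrite !tensmx_mul mul1mx mulmx1 TFT tensmxZl.
Qed.

End SpectrahedronAction.

Section CliffordReflection.
Variables (C : numClosedFieldType) (g d : nat) (F : 'I_g -> 'M[C]_d).
Variable W : 'M[C]_d.
Hypothesis F_selfadj : forall j, selfadj (F j).
Hypothesis F_anticomm :
  forall j k, F j *m F k + F k *m F j = ((j == k)%:R *+ 2)%:M.
Hypothesis W_unitary : adjmx W *m W = 1%:M.
Hypothesis W_anticomm : forall j, W *m F j = - (F j *m W).

Variable w : 'cV[C]_g.
Hypothesis w_real : forall j, (w j 0)^* = w j 0.
Let c := (w^T *m w) 0 0.
Let S := \sum_j w j 0 *: F j.

Lemma anticomm_comb k : S *m F k + F k *m S = (2 * w k 0)%:M.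
Proof.
rewrite /S mulmx_suml mulmx_sumr -big_split /=.
under eq_bigr do rewrite -scalemxAl -scalemxAr -scalerDr F_anticomm.
rewrite (bigD1 k) //= big1 => [|j /negbTE ->]; last by rewrite mul0rn raddf0 scaler0.
by rewrite eqxx /= addr0 scale_scalar_mx mulrC.
Qed.

Lemma comb_sq : S *m S = c%:M.
Proof.
apply: (@scalerI _ _ 2); first by rewrite pnatr_eq0.
rewrite scaler_nat mulr2n.
have {1}-> : S *m S = \sum_k w k 0 *: (S *m F k).
  by rewrite {2}/S mulmx_sumr; apply: eq_bigr => k _; rewrite scalemxAr.
have -> : S *m S = \sum_k w k 0 *: (F k *m S).
  by rewrite {1}/S mulmx_suml; apply: eq_bigr => k _; rewrite scalemxAl.
rewrite -big_split /=.
under eq_bigr do rewrite -scalerDr anticomm_comb scale_scalar_mx.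
rewrite -raddf_sum scale_scalar_mx /c mxE mulr_sumr; congr (_%:M).
by apply: eq_bigr => k _; rewrite mxE mulrCA.
Qed.

Lemma selfadj_comb : selfadj S.
Proof.
rewrite /selfadj /S adjmx_sum; apply: eq_bigr => j _.
by rewrite adjmxZ w_real F_selfadj.
Qed.

Lemma grading_comb_unitary : adjmx (S *m W) *m (S *m W) = c%:M.
Proof.
rewrite adjmxM selfadj_comb mulmxA -(mulmxA (adjmx W)) comb_sq.
by rewrite mul_mx_scalar -scalemxAl W_unitary scalemx1.
Qed.

Lemma grading_comb_congr k :
  adjmx (S *m W) *m F k *m (S *m W) = c *: F k - (2 * w k 0) *: S.
Proof.
have flipF j : adjmx W *m F j *m W = - F j.
  by rewrite -mulmxA -[F j *m W]opprK -W_anticomm mulmxN mulmxA W_unitary mul1mx.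
have flipS : adjmx W *m S *m W = - S.
  rewrite /S mulmx_sumr mulmx_suml -sumrN; apply: eq_bigr => j _.
  by rewrite -scalemxAr -scalemxAl flipF scalerN.
have SFS : S *m F k *m S = (2 * w k 0) *: S - c *: F k.
  rewrite -[S *m F k](addrK (F k *m S)) anticomm_comb mulmxBl mul_scalar_mx.
  by rewrite -mulmxA comb_sq mul_mx_scalar.
rewrite adjmxM selfadj_comb !mulmxA -(mulmxA (adjmx W)) -(mulmxA (adjmx W)) SFS.
rewrite mulmxBr mulmxBl -!scalemxAr -!scalemxAl flipS flipF !scalerN.
by rewrite opprK addrC.
Qed.

Lemma householder_comb k : c != 0 ->
  c *: \sum_j householder w j k *: F j = c *: F k - (2 * w k 0) *: S.
Proof.
move=> c_neq0; under eq_bigr do rewrite householderE scalerBl.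
rewrite sumrB scalerBr; congr (_ - _).
  rewrite (bigD1 k) //= big1 => [|j /negbTE ->]; last by rewrite scale0r.
  by rewrite eqxx scale1r addr0.
rewrite /S scaler_sumr scaler_sumr; apply: eq_bigr => j _.
by rewrite !scalerA; congr (_ *: _); rewrite -/c; field.
Qed.

Lemma inDA_householder n (X : 'I_g -> 'M[C]_n) :
  0 < c -> inDA F X -> inDA F (mxact (householder w) X).
Proof.
move=> c_gt0; apply: (inDA_mxact_congr c_gt0 _ grading_comb_unitary) => [j k|k].
  have c_real : c^* = c by apply/conj_Creal/gtr0_real.
  rewrite householderE -/c rmorphB rmorph_nat rmorphM fmorph_div rmorph_nat /=.
  by rewrite c_real rmorphM /= !w_real.
by rewrite grading_comb_congr householder_comb // gt_eqF.
Qed.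

End CliffordReflection.

Section RealOrthogonalAction.
Variables (R : realType) (m : nat).
Local Notation C := R[i].
Local Notation F := (@Fmat C m).

Lemma inDA_mxact_orthomx (U : 'M[R]_m.+2) n (X : 'I_m.+2 -> 'M[C]_n) :
  U^T *m U = 1%:M -> inDA F X -> inDA F (mxact (map_mx (real_complex R) U) X).
Proof.
have [Fsa Fanti [W W_unitary W_anti]] := graded_clifford_Fmat C m.
move=> hU; move: U hU n X.
apply: orthomx_householder_ind => [n X | w U c_neq0 PU n X inDA_X].
  by apply: eq_inDA => j; rewrite map_mx1 mxact1.
pose wC := map_mx (real_complex R) w.
have wC_real j : (wC j 0)^* = wC j 0 by rewrite mxE; exact: conjc_real.
have cC_gt0 : 0 < (wC^T *m wC) 0 0.
  rewrite map_trmx -map_mxM mxE -(rmorph0 (real_complex R)) ltcR.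
  by rewrite lt_def c_neq0 dotmx_self_ge0.
have := inDA_householder Fsa Fanti W_unitary W_anti wC_real cC_gt0 (PU n X inDA_X).
by apply: eq_inDA => j; rewrite map_mxM map_householder mxact_mul.
Qed.

End RealOrthogonalAction.

Theorem mainTheorem4 (R : realType) (m : nat) (U : 'M[R]_(m.+2))
    (hU : U^T *m U = 1%:M) (n : nat) (X : 'I_(m.+2) -> 'M[R[i]]_n)
    (hX : inDA (@Fmat R[i] m) X) :
  inDA (@Fmat R[i] m)
    (fun j => \sum_(k < m.+2) (U j k)%:C%C *: X k)
  /\ (forall s : 'I_(m.+2) -> bool,
        inDA (@Fmat R[i] m) (fun j => (-1) ^+ s j *: X j)).
Proof.
split=> [|s].
  have := inDA_mxact_orthomx hU hX.
  by apply: eq_inDA => j; apply: eq_bigr => k _; rewrite mxE.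
pose D := diag_mx (\row_j ((-1) ^+ s j : R)).
have hD : D^T *m D = 1%:M.
  rewrite tr_diag_mx mulmx_diag -diag_const_mx; congr diag_mx.
  by apply/rowP => j; rewrite !mxE -expr2 sqrr_sign.
have := inDA_mxact_orthomx hD hX.
by apply: eq_inDA => j; rewrite map_diag_mx mxact_diag !mxE rmorph_sign.
Qed.
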